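(* Let $n\ge1$ and let $T\in\mathbb R[x,u_0,\dots,u_n]$ be nonzero. Write $T=Q(x,v_0,\dots,v_n)$ with $Q$ a real polynomial, and let $m$ be the degree of $Q$ in the variable $x$. Then $T(\mathcal P_n)\subset\mathcal P_m$ and $T(\mathcal P_n)\not\subset\mathcal P_{m-1}$; i.e. $T$ has deficiency $n-m$ relative to $\mathcal P_n$.
   Context: Elements $P\in\mathbb R[x,u_0,\dots,u_n]$ act on smooth $f$ by $P[f](x)=P(x,f(x),f'(x),\dots,f^{(n)}(x))$. $\mathcal P_s$ is the space of real polynomials in $x$ of degree $\le s$ ($\mathcal P_s=\{0\}$ for $s<0$). Deficiency $m$ relative to $\mathcal P_n$ means $T(\mathcal P_n)\subset\mathcal P_{n-m}$ but $T(\mathcal P_n)\not\subset\mathcal P_{n-m-1}$. For $j=0,\dots,n$, $v_j=\sum_{i=0}^{n-j}(-1)^i\frac{x^i}{i!}u_{i+j}$; the elements $x,v_0,\dots,v_n$ freely generate the algebra $\mathbb R[x,u_0,\dots,u_n]$, so $Q$ is unique. *)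

From Stdlib Require Import Rdefinitions.
From HB Require Import structures.
From mathcomp Require Import all_boot all_order all_algebra.
From mathcomp Require Import mpoly.
From mathcomp Require Import Rstruct.
Set Implicit Arguments. Unset Strict Implicit. Unset Printing Implicit Defensive.
Import Order.TTheory GRing.Theory Num.Theory.
Local Open Scope ring_scope.

(* The algebra R[x,u_0,...,u_n] is {mpoly R[n.+2]}: variable 0 is x,
   variable (i+1) is u_i. *)
Notation diffpoly n := {mpoly R[n.+2]}.

Definition xvar (n : nat) : diffpoly n := 'X_(@ord0 n.+1).
Definition uvar (n i : nat) : diffpoly n := 'X_(inord i.+1).

Definition vvar (n j : nat) : diffpoly n :=
  \sum_(i < (n - j).+1)
     ((-1) ^+ i / (i`!)%:R) *: (xvar n ^+ i * uvar n (i + j)).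

Definition subst_xv (n : nat) (Q : diffpoly n) : diffpoly n :=
  Q \mPo [tuple (if i == 0%N :> nat then xvar n else vvar n i.-1)
          | i < n.+2].

Definition degx (n : nat) (Q : diffpoly n) : nat :=
  \max_(mm <- msupp Q) mm (@ord0 n.+1).

(* Action of P on a (polynomial) function f:
   P[f](x) = P(x, f(x), f'(x), ..., f^(n)(x)), computed as a polynomial. *)
Definition act (n : nat) (P : diffpoly n) (f : {poly R}) : {poly R} :=
  mmap (@polyC R)
    (fun i : 'I_n.+2 => if val i == 0%N then 'X else f^`((val i).-1)) P.

(* P_s = real polynomials of degree <= s; P_s = {0} for s < 0.
   Membership in P_(s-1) for s : nat is written [size f <= s]. *)
Definition inP (s : nat) (f : {poly R}) : Prop := (size f <= s.+1)%N.

(* For f of degree at most n, Taylor's formula shows that v_j acts on f as the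
   constant f^(j)(0).  Hence T[f] = Q(x, f(0), f'(0), ..., f^(n)(0)), a
   polynomial of degree at most m in x whose x^m-coefficient is Q_m(f(0), ...,
   f^(n)(0)), with Q_m <> 0 the leading coefficient of Q viewed as a polynomial
   in x.  A nonzero real polynomial does not vanish everywhere, and any jet
   (c_0, ..., c_n) is the jet at 0 of a polynomial of degree at most n, so some
   f makes the x^m-coefficient of T[f] nonzero. *)

From Stdlib Require Import Rdefinitions.
From HB Require Import structures.
From mathcomp Require Import all_boot all_order all_algebra.
From mathcomp Require Import mpoly.
From mathcomp Require Import Rstruct.
From mathcomp Require Import ring.
From Stdlib Require Import Classical.
Set Implicit Arguments. Unset Strict Implicit. Unset Printing Implicit Defensive.
Import Order.TTheory GRing.Theory Num.Theory.
Local Open Scope ring_scope.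

Section MpolyRmorph.
Variables (k : nat) (K S : comNzRingType).

Lemma rmorph_mpolyE (phi : {rmorphism {mpoly K[k]} -> S}) (p : {mpoly K[k]}) :
  phi p = mmap (phi \o (@mpolyC k K)) (fun i => phi 'X_i) p.
Proof.
rewrite {1}(mpolyE p) rmorph_sum; apply: eq_bigr => m _.
rewrite -mul_mpolyC rmorphM /= /mmap1 mpolyXE_id rmorph_prod.
by congr (_ * _); apply: eq_bigr => i _; rewrite rmorphXn.
Qed.

Lemma eq_mpoly_rmorph (phi psi : {rmorphism {mpoly K[k]} -> S}) :
  (forall c, phi c%:MP = psi c%:MP) -> (forall i, phi 'X_i = psi 'X_i) ->
  phi =1 psi.
Proof.
move=> eqC eqX p; rewrite rmorph_mpolyE [RHS]rmorph_mpolyE.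
by apply: eq_bigr => m _; rewrite /= eqC (mmap1_eq _ eqX).
Qed.

End MpolyRmorph.

Lemma eq_mmap (k : nat) (K S : nzRingType) (f : K -> S) (h1 h2 : 'I_k -> S) :
  h1 =1 h2 -> mmap f h1 =1 mmap f h2.
Proof. by move=> eqh p; apply: eq_bigr => m _; rewrite (mmap1_eq _ eqh). Qed.

Lemma mmap_comp_mpoly (k l : nat) (K S : comNzRingType) (f : {rmorphism K -> S})
    (h : 'I_l -> S) (lq : k.-tuple {mpoly K[l]}) (p : {mpoly K[k]}) :
  mmap f h (p \mPo lq) = mmap f (fun i => mmap f h (tnth lq i)) p.
Proof.
apply: (@eq_mpoly_rmorph k K S (mmap f h \o comp_mpoly lq)) => [c|i] /=.
  by rewrite comp_mpolyC !mmapC.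
by rewrite comp_mpolyXU -tnth_nth mmapX !mmap1U.
Qed.

Local Notation widen := (widen_ord (leqnSn _)).

Section MpolyUnivariate.
Variable K : comNzRingType.

Lemma lift_max_widen k (j : 'I_k) : lift ord_max j = widen j.
Proof. exact/val_inj/lift_max. Qed.

Lemma muniXwiden k (j : 'I_k) :
  muni ('X_(widen j) : {mpoly K[k.+1]}) = ('X_j)%:P.
Proof.
rewrite /muni mmapX mmap1U; case: splitP => [j' eqj|j'].
  by congr ('X__)%:P; apply/val_inj; rewrite /= -eqj.
by rewrite ord1 /= addn0 => /eqP; rewrite ltn_eqF.
Qed.

Lemma muniXmax k : muni ('X_ord_max : {mpoly K[k.+1]}) = 'X.
Proof.
rewrite /muni mmapX mmap1U; case: splitP => // j.
by move=> eqj; have := ltn_ord j; rewrite -eqj /= ltnn.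
Qed.

Lemma meval_muni k (v : 'I_k.+1 -> K) (p : {mpoly K[k.+1]}) :
  p.@[v] = (map_poly (meval (fun j => v (widen j))) (muni p)).[v ord_max].
Proof.
pose phi := horner_eval (v ord_max)
  \o map_poly (meval (fun j => v (widen j))) \o @muni k K.
apply: (@eq_mpoly_rmorph _ _ _ (meval v) phi) => [c|i].
  by rewrite /phi /= mevalC muniC map_polyC /= mevalC /horner_eval hornerC.
rewrite /phi /= mevalXU; case: (unliftP ord_max i) => [j ->|->].
  rewrite lift_max_widen muniXwiden map_polyC /= mevalXU /horner_eval hornerC.
  by congr v; apply: val_inj.
by rewrite muniXmax map_polyX /horner_eval hornerX.
Qed.

Lemma muniK k (p : {mpoly K[k.+1]}) :
  (map_poly (@mwiden k K) (muni p)).['X_ord_max] = p.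
Proof.
pose phi := horner_eval ('X_ord_max : {mpoly K[k.+1]})
  \o map_poly (@mwiden k K) \o @muni k K.
apply: (@eq_mpoly_rmorph _ _ _ phi idfun) => [c|i].
  by rewrite /phi /= muniC map_polyC /= mwidenC /horner_eval hornerC.
rewrite /phi /=; case: (unliftP ord_max i) => [j ->|->].
  rewrite lift_max_widen muniXwiden map_polyC /= /horner_eval hornerC.
  by rewrite /mwiden mmapX mmap1U.
by rewrite muniXmax map_polyX /horner_eval hornerX.
Qed.

End MpolyUnivariate.

Section MpolyVanishing.
Variable K : numDomainType.

Lemma poly_horner_eq (p q : {poly K}) : (forall t, p.[t] = q.[t]) -> p = q.
Proof.
move=> eqpq; apply/eqP; rewrite -subr_eq0; apply/eqP; set r := p - q.
apply: (@roots_geq_poly_eq0 _ r [seq i%:R | i <- iota 0 (size r)]).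
- by apply/allP => x /mapP [i _ ->]; rewrite /root hornerD hornerN eqpq subrr.
- by rewrite map_inj_uniq ?iota_uniq // => i j /eqP; rewrite eqr_nat => /eqP.
- by rewrite size_map size_iota.
Qed.

Lemma mpoly_vanish_eq0 k (p : {mpoly K[k]}) : (forall v, p.@[v] = 0) -> p = 0.
Proof.
elim: k p => [|k IHk] p p0.
  move: (p0 (fun=> 0)); rewrite {1}[p]nvar0_mpolyC mevalC => p00.
  by rewrite [p]nvar0_mpolyC p00.
rewrite -[p]muniK; suff -> : muni p = 0 by rewrite map_poly0 horner0.
apply/polyP => j; rewrite coef0; apply: IHk => w.
have uniw0 : map_poly (meval w) (muni p) = 0.
  apply: poly_horner_eq => t; rewrite horner0.
  pose v i := if unlift ord_max i is Some j then w j else t.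
  have vw : (fun j => v (widen j)) =1 w.
    by move=> j'; rewrite /v -lift_max_widen liftK.
  have := meval_muni v p; rewrite p0 (eq_map_poly (fun q => meval_eq q vw)).
  by rewrite /v unlift_none => <-.
by move/polyP: uniw0 => /(_ j); rewrite coef_map coef0.
Qed.
End MpolyVanishing.

Section TaylorAtZero.
Variable K : numFieldType.

Lemma size_derivn (p : {poly K}) j : (size p^`(j) <= size p - j)%N.
Proof.
apply/leq_sizeP => i lei; rewrite coef_derivn nth_default ?mul0rn //.
by rewrite -leq_subLR.
Qed.

Lemma taylor_at0 (g : {poly K}) N : (size g <= N)%N ->
  \sum_(i < N) ((-1) ^+ i / (i`!)%:R) *: ('X^i * g^`(i)) = (g.[0])%:P.
Proof.
(* Expand g around t and evaluate at 0 = t + (- t). *)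
move=> szg; apply: poly_horner_eq => t.
rewrite hornerC -[in RHS](subrr t) (nderiv_taylor_wide (mulrC t (- t)) szg).
rewrite horner_sum.
apply: eq_bigr => i _; rewrite hornerZ hornerM hornerXn nderivn_def hornerMn.
have fact_neq0 : (i`!)%:R != 0 :> K by rewrite pnatr_eq0 -lt0n fact_gt0.
by rewrite (exprNn t) -[_ *+ i`!]mulr_natr; field.
Qed.
End TaylorAtZero.

Lemma bigmax_seq_attained (T : eqType) (s : seq T) (F : T -> nat) :
  s != [::] -> exists2 x, x \in s & \max_(y <- s) F y = F x.
Proof.
elim: s => [//|a s IHs] _; rewrite big_cons.
have [->|/IHs [x xs ->]] := eqVneq s [::].
  by exists a; rewrite ?mem_seq1 // big_nil maxn0.
have [Fxa|Fax] := leqP (F x) (F a).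
  by exists a; rewrite ?mem_head //; apply/maxn_idPl.
by exists x; rewrite ?inE ?xs ?orbT //; apply/maxn_idPr/ltnW.
Qed.

Section XEval.
Variables (k : nat) (K : comNzRingType).
Implicit Types (c : 'I_k -> K) (p : {mpoly K[k.+1]}).

Definition xeval c p : {poly K} :=
  mmap (@polyC K) (fun i => if unlift ord0 i is Some j then (c j)%:P else 'X) p.

Definition xdeg p : nat := \max_(m <- msupp p) m ord0.

Definition mnmtail (m : 'X_{1..k.+1}) : 'X_{1..k} :=
  [multinom m (lift ord0 i) | i < k].

Definition xcoef p (d : nat) : {mpoly K[k]} :=
  \sum_(m <- msupp p | m ord0 == d) p@_m *: 'X_[mnmtail m].

Lemma xevalE c p : xeval c p =
  \sum_(m <- msupp p)
    (p@_m * \prod_(i < k) c i ^+ m (lift ord0 i))%:P * 'X^(m ord0).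
Proof.
apply: eq_bigr => m _; rewrite /mmap1 big_ord_recl unlift_none /=.
under eq_bigr => i _ do rewrite liftK -rmorphXn.
by rewrite -rmorph_prod polyCM -mulrA [_ * 'X^_]mulrC.
Qed.

Lemma size_xeval c p : (size (xeval c p) <= (xdeg p).+1)%N.
Proof.
rewrite xevalE (leq_trans (size_sum _ _ _)) //; apply/bigmax_leqP_seq => m mp _.
rewrite mul_polyC (leq_trans (size_scale_leq _ _)) // size_polyXn ltnS.
exact: leq_bigmax_seq.
Qed.

Lemma coef_xeval c p d : (xeval c p)`_d = (xcoef p d).@[c].
Proof.
rewrite xevalE coef_sum /xcoef rmorph_sum [RHS]big_mkcond; apply: eq_bigr => m _.
rewrite coefCM coefXn eq_sym; case: (m ord0 =P d) => _; last by rewrite mulr0.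
rewrite /= mulr1 linearZ /= mevalX; congr (_ * _).
by apply: eq_bigr => i _; rewrite mnmE.
Qed.

Lemma mnmtail_inj (m1 m2 : 'X_{1..k.+1}) :
  m1 ord0 = m2 ord0 -> mnmtail m1 = mnmtail m2 -> m1 = m2.
Proof.
move=> eq0 eqtail; apply/mnmP => i; case: (unliftP ord0 i) => [j ->|->] //.
by have := congr1 (fun m : 'X_{1..k} => m j) eqtail; rewrite !mnmE.
Qed.

Lemma xcoef_xdeg_neq0 p : p != 0 -> xcoef p (xdeg p) != 0.
Proof.
rewrite -msupp_eq0 => /(bigmax_seq_attained (fun m : 'X_{1..k.+1} => m ord0)).
move=> [m0 m0p xdegE]; apply/eqP => /(congr1 (mcoeff (mnmtail m0))).
rewrite mcoeff0 /xcoef raddf_sum /= big_mkcond (bigD1_seq m0) ?msupp_uniq //=.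
rewrite /xdeg xdegE eqxx big1 ?addr0.
  by rewrite mcoeffZ mcoeffX eqxx mulr1 => /eqP; rewrite mcoeff_eq0 m0p.
move=> m m_neq_m0; case: eqP => // eqm0; rewrite mcoeffZ mcoeffX.
case: eqP => [eqtail|]; last by rewrite mulr0.
by move: m_neq_m0; rewrite (mnmtail_inj eqm0 eqtail) eqxx.
Qed.
End XEval.

Lemma mpoly_nonvanishing (K : numDomainType) k (p : {mpoly K[k]}) :
  p != 0 -> exists v, p.@[v] != 0.
Proof.
move=> p_neq0; apply: NNPP => nonzero_nowhere; move/eqP: p_neq0; apply.
apply: mpoly_vanish_eq0 => v; apply: NNPP => pv_neq0.
by apply: nonzero_nowhere; exists v; apply/eqP.
Qed.

Lemma exists_poly_derivn0 (K : numFieldType) k (c : 'I_k.+1 -> K) :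
  exists2 f : {poly K},
    (size f <= k.+1)%N & forall i : 'I_k.+1, f^`(i).[0] = c i.
Proof.
exists (\poly_(j < k.+1) (c (inord j) / (j`!)%:R)) => [|i]; first exact: size_poly.
rewrite horner_coef0 coef_derivn addn0 ffactnn coef_poly ltn_ord inord_val.
by rewrite -[_ *+ _]mulr_natr divfK // pnatr_eq0 -lt0n fact_gt0.
Qed.

Lemma act_xvar n (f : {poly R}) : act (xvar n) f = 'X.
Proof. by rewrite /act /xvar mmapX mmap1U. Qed.

Lemma act_vvar n j (f : {poly R}) : (j <= n)%N -> (size f <= n.+1)%N ->
  act (vvar n j) f = (f^`(j).[0])%:P.
Proof.
move=> le_jn szf; rewrite /act /vvar rmorph_sum /=.
rewrite -(taylor_at0 (g := f^`(j)) (N := (n - j).+1)); last first.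
  by rewrite -subSn // (leq_trans (size_derivn _ _)) // leq_sub2r.
apply: eq_bigr => i _; rewrite mmapZ mul_polyC rmorphM rmorphXn.
rewrite /= /xvar /uvar !mmapX !mmap1U /= inordK; last first.
  by rewrite ltnS addnC -ltn_subRL subSn // ltn_ord.
by rewrite /derivn iterD.
Qed.

Lemma act_subst_xv n (Q : diffpoly n) (f : {poly R}) : (size f <= n.+1)%N ->
  act (subst_xv Q) f = xeval (fun j : 'I_n.+1 => f^`(j).[0]) Q.
Proof.
move=> szf; rewrite /act /subst_xv mmap_comp_mpoly; apply: eq_mmap => i.
rewrite tnth_mktuple -[mmap _ _ _]/(act _ f).
case: (unliftP ord0 i) => [j ->|->]; last exact: act_xvar.
by rewrite /= add0n act_vvar // -ltnS.
Qed.

Theorem mainTheorem6 (n : nat) (T Q : {mpoly R[n.+2]}) :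
  (1 <= n)%N ->
  T != 0 ->
  T = subst_xv Q ->
  (forall f : {poly R}, inP n f -> inP (degx Q) (act T f)) /\
  (exists f : {poly R}, inP n f /\ ~ (size (act T f) <= degx Q)%N).
Proof.
move=> _ T_neq0 defT; subst T.
have Q_neq0 : Q != 0.
  by apply: contraNneq T_neq0 => ->; rewrite /subst_xv comp_mpoly0.
split=> [f szf|]; first by rewrite /inP act_subst_xv // size_xeval.
have [c lead_c] := mpoly_nonvanishing (xcoef_xdeg_neq0 Q_neq0).
have [f szf f_c] := exists_poly_derivn0 c.
exists f; split=> // /leq_sizeP /(_ _ (leqnn _)).
by rewrite act_subst_xv // coef_xeval (meval_eq _ f_c); apply/eqP.
Qed.
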